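(* Let $d>0$ and fix a robot $i$ with position $p_i(t)\in\mathbb{R}^3$ obeying $\dot p_i(t)=v_{io}(t)$. Let $p_i^o:\mathbb{R}_{\ge0}\to\mathbb{R}^3$ be the position of the nearest obstacle (or teammate) of robot $i$, with velocity $v_i^o=\dot p_i^o$, and assume $p_i(t)\neq p_i^o(t)$ along the motion. Define $\rho_{io}=\tfrac12\|p_i-p_i^o\|^2$, the task error $\tilde\rho_{io}=\tfrac{d^2}{2}-\rho_{io}$, the row vectors $J_{io}=(p_i-p_i^o)^\top$, $J_i^o=-(p_i-p_i^o)^\top$, and $J_{io}^\dagger=(p_i-p_i^o)/\|p_i-p_i^o\|^2$. Let $\lambda_{io},\beta_1,\beta_2,r_0,r_1,r_2>0$ with $r_1r_0>1$, $r_2r_0<1$, $r_0\in(\tfrac12,1)$, and let the velocity be $$v_{io}=J_{io}^\dagger\Big[\lambda_{io}\big(\beta_1\tilde\rho_{io}^{[r_1]}+\beta_2\tilde\rho_{io}^{[r_2]}\big)^{[r_0]}-J_i^o v_i^o\Big].$$ If $\|p_i(0)-p_i^o(0)\|\le d$, then for any $\tilde\rho_{io}(0)\in\mathbb{R}$ there exists a settling time $T_{i,o}>0$, bounded independently of the initial condition, such that $\|p_i(t)-p_i^o(t)\|\ge d$ for all $t\ge T_{i,o}$ (indeed $\tilde\rho_{io}$ converges to $0$ within this fixed time).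
   Context: For $x,p\in\mathbb{R}$, $x^{[p]}:=|x|^p\,\mathrm{sgn}(x)$. Norms are Euclidean. A settling time is ''fixed'' if it is bounded by a constant independent of initial conditions. *)

From Stdlib Require Import Reals.
From Coquelicot Require Import Coquelicot.
Open Scope R_scope.

Definition vec3 : Type := (R * R * R)%type.
Definition vx (v : vec3) : R := fst (fst v).
Definition vy (v : vec3) : R := snd (fst v).
Definition vz (v : vec3) : R := snd v.
Definition vsub (u v : vec3) : vec3 := (vx u - vx v, vy u - vy v, vz u - vz v).
Definition vscale (a : R) (v : vec3) : vec3 := (a * vx v, a * vy v, a * vz v).
Definition vdot (u v : vec3) : R := vx u * vx v + vy u * vy v + vz u * vz v.
Definition vnorm (v : vec3) : R := sqrt (vdot v v).

(* Signed power x^[p] := |x|^p sgn(x)  (with 0^[p] = 0). *)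
Definition spow (x p : R) : R :=
  if Rlt_dec 0 x then Rpower x p
  else if Rlt_dec x 0 then - Rpower (- x) p else 0.

Definition is_deriv3 (f : R -> vec3) (f' : vec3) (t : R) : Prop :=
  is_derive (fun s => vx (f s)) t (vx f') /\
  is_derive (fun s => vy (f s)) t (vy f') /\
  is_derive (fun s => vz (f s)) t (vz f').

Definition right_cont3 (f : R -> vec3) (t : R) : Prop :=
  filterlim (fun s => vx (f s)) (at_right t) (locally (vx (f t))) /\
  filterlim (fun s => vy (f s)) (at_right t) (locally (vy (f t))) /\
  filterlim (fun s => vz (f s)) (at_right t) (locally (vz (f t))).

Definition rho_io (p po : vec3) : R := / 2 * vdot (vsub p po) (vsub p po).
Definition rho_tilde (d : R) (p po : vec3) : R := d ^ 2 / 2 - rho_io p po.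

Definition J_io (p po w : vec3) : R := vdot (vsub p po) w.
Definition J_i_o (p po w : vec3) : R := - vdot (vsub p po) w.
Definition J_io_dag (p po : vec3) (s : R) : vec3 :=
  vscale (s / (vnorm (vsub p po) ^ 2)) (vsub p po).

Definition v_io (d lam b1 b2 r0 r1 r2 : R) (p po vo : vec3) : vec3 :=
  let rt := rho_tilde d p po in
  J_io_dag p po (lam * spow (b1 * spow rt r1 + b2 * spow rt r2) r0
                 - J_i_o p po vo).

From Stdlib Require Import Reals Lra Psatz.
From Coquelicot Require Import Coquelicot.
Open Scope R_scope.

(* The proof reduces the closed loop to a scalar ODE for the task error
   e = rho~_io.  Since J_io J_io^dagger = 1 and J_io p' + J_i^o po' is the
   time derivative of rho_io, the velocity law gives exactly

       e' = - lam phi(e),   phi(x) = (b1 x^[r1] + b2 x^[r2])^[r0].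

   phi is odd and coercive: x phi(x) >= b2^r0 |x|^(1 + r2 r0).  Hence the
   Lyapunov function h = e^2 is nonincreasing and satisfies
   h' <= - k h^alpha with alpha = (1 + r2 r0)/2 < 1, so by the classical
   finite-time extinction argument (h^(1-alpha) decreases at a uniform rate)
   h vanishes after a time depending only on an upper bound of h(0).
   Because ||p(0) - po(0)|| <= d, the initial error lies in [0, d^2/2],
   which yields a settling time independent of the initial condition. *)

(* Stdlib's Rpower x y = exp (y ln x) is positive for every x. *)
Lemma Rpower_pos (x y : R) : 0 < Rpower x y.
Proof. unfold Rpower; apply exp_pos. Qed.

Lemma spow_pos (x r : R) : 0 < x -> spow x r = Rpower x r.
Proof. intros H; unfold spow; destruct (Rlt_dec 0 x); [reflexivity | lra]. Qed.

Lemma spow_opp (x r : R) : spow (- x) r = - spow x r.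
Proof.
  unfold spow.
  destruct (Rlt_dec 0 (- x)), (Rlt_dec 0 x); try lra;
  destruct (Rlt_dec (- x) 0), (Rlt_dec x 0); try lra;
  rewrite ?Ropp_involutive; try ring.
Qed.

Definition phi (b1 b2 r0 r1 r2 x : R) : R :=
  spow (b1 * spow x r1 + b2 * spow x r2) r0.

Lemma phi_opp (b1 b2 r0 r1 r2 x : R) :
  phi b1 b2 r0 r1 r2 (- x) = - phi b1 b2 r0 r1 r2 x.
Proof.
  unfold phi. rewrite (spow_opp x r1), (spow_opp x r2), <- (spow_opp _ r0).
  replace (b1 * - spow x r1 + b2 * - spow x r2)
    with (- (b1 * spow x r1 + b2 * spow x r2)) by ring.
  reflexivity.
Qed.

(* On the positive axis the slow term b2 x^r2 alone already gives
   x phi(x) >= b2^r0 x^(1 + r2 r0). *)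
Lemma phi_coercive_pos (b1 b2 r0 r1 r2 x : R) :
  0 < b1 -> 0 < b2 -> 0 < r0 -> 0 < x ->
  Rpower b2 r0 * Rpower (x * x) ((1 + r2 * r0) / 2) <= x * phi b1 b2 r0 r1 r2 x.
Proof.
  intros Hb1 Hb2 Hr0 Hx. unfold phi.
  pose proof (Rpower_pos x r1); pose proof (Rpower_pos x r2).
  rewrite !spow_pos by (rewrite ?spow_pos; nra).
  assert (Hslow : Rpower b2 r0 * Rpower x (r2 * r0)
                  <= Rpower (b1 * Rpower x r1 + b2 * Rpower x r2) r0).
  { rewrite <- Rpower_mult, Rpower_mult_distr by (try apply Rpower_pos; lra).
    apply Rle_Rpower_l; [lra | split; nra]. }
  assert (Hsq : Rpower (x * x) ((1 + r2 * r0) / 2) = x * Rpower x (r2 * r0)).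
  { rewrite <- Rpower_mult_distr, <- Rpower_plus by lra.
    replace ((1 + r2 * r0) / 2 + (1 + r2 * r0) / 2) with (1 + r2 * r0) by field.
    rewrite Rpower_plus, Rpower_1 by lra. reflexivity. }
  rewrite Hsq. pose proof (Rpower_pos b2 r0). nra.
Qed.

(* Coercivity of phi on the whole line, by oddness. *)
Lemma phi_coercive (b1 b2 r0 r1 r2 x : R) :
  0 < b1 -> 0 < b2 -> 0 < r0 -> x <> 0 ->
  Rpower b2 r0 * Rpower (x * x) ((1 + r2 * r0) / 2) <= x * phi b1 b2 r0 r1 r2 x.
Proof.
  intros Hb1 Hb2 Hr0 Hx. destruct (Rlt_dec 0 x) as [Hpos | Hneg].
  - apply phi_coercive_pos; assumption.
  - replace (x * x) with (- x * - x) by ring.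
    replace (x * phi b1 b2 r0 r1 r2 x) with (- x * phi b1 b2 r0 r1 r2 (- x))
      by (rewrite phi_opp; ring).
    apply phi_coercive_pos; lra.
Qed.

Lemma phi_sign (b1 b2 r0 r1 r2 x : R) :
  0 < b1 -> 0 < b2 -> 0 < r0 -> 0 <= x * phi b1 b2 r0 r1 r2 x.
Proof.
  intros Hb1 Hb2 Hr0. destruct (Req_dec x 0) as [-> | Hx]; [lra |].
  eapply Rle_trans; [| apply phi_coercive; assumption].
  pose proof (Rpower_pos b2 r0); pose proof (Rpower_pos (x * x) ((1 + r2 * r0) / 2)).
  nra.
Qed.

Lemma continuity_pt_of_derive (f : R -> R) (x l : R) :
  is_derive f x l -> continuity_pt f x.
Proof.
  intros H. apply continuity_pt_filterlim.
  apply (@ex_derive_continuous R_AbsRing R_NormedModule). exists l; exact H.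
Qed.

Lemma nonincreasing_of_derive (f df : R -> R) (a : R) :
  (forall t, a < t -> is_derive f t (df t)) -> (forall t, a < t -> df t <= 0) ->
  forall s t, a < s -> s <= t -> f t <= f s.
Proof.
  intros Hd Hneg s t Hs Hst. destruct (Req_dec s t) as [<- | Hne]; [lra |].
  destruct (MVT_gen f s t df) as [c [Hc Hmvt]];
    rewrite ?Rmin_left, ?Rmax_right in * by lra.
  - intros x Hx. apply Hd. lra.
  - intros x Hx. eapply continuity_pt_of_derive, Hd. lra.
  - pose proof (Hneg c ltac:(lra)). nra.
Qed.

Lemma le_initial_of_nonincreasing (f : R -> R) :
  (forall s t, 0 < s -> s <= t -> f t <= f s) ->
  filterlim f (at_right 0) (locally (f 0)) ->
  forall t, 0 < t -> f t <= f 0.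
Proof.
  intros Hmono Hlim t Ht.
  apply (closed_filterlim_loc f (fun u => f t <= u) (f 0) Hlim); [| apply closed_ge].
  exists (mkposreal t Ht). intros s Hs Hs0. apply Hmono; [exact Hs0 |].
  unfold ball in Hs; simpl in Hs; unfold AbsRing_ball, abs, minus, plus, opp in Hs; simpl in Hs.
  apply Rabs_def2 in Hs. lra.
Qed.

Lemma lim_mult {T : Type} {F : (T -> Prop) -> Prop} {FF : Filter F}
  (f g : T -> R) (a b : R) :
  filterlim f F (locally a) -> filterlim g F (locally b) ->
  filterlim (fun s => f s * g s) F (locally (a * b)).
Proof.
  intros Hf Hg. eapply filterlim_comp_2; [exact Hf | exact Hg |].
  exact (@filterlim_mult R_AbsRing a b).
Qed.

Lemma lim_plus {T : Type} {F : (T -> Prop) -> Prop} {FF : Filter F}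
  (f g : T -> R) (a b : R) :
  filterlim f F (locally a) -> filterlim g F (locally b) ->
  filterlim (fun s => f s + g s) F (locally (a + b)).
Proof.
  intros Hf Hg. eapply filterlim_comp_2; [exact Hf | exact Hg |].
  exact (@filterlim_plus _ R_NormedModule a b).
Qed.

Lemma lim_minus {T : Type} {F : (T -> Prop) -> Prop} {FF : Filter F}
  (f g : T -> R) (a b : R) :
  filterlim f F (locally a) -> filterlim g F (locally b) ->
  filterlim (fun s => f s - g s) F (locally (a - b)).
Proof.
  intros Hf Hg. apply lim_plus; [exact Hf |].
  eapply filterlim_comp; [exact Hg | exact (@filterlim_opp _ R_NormedModule b)].
Qed.

Lemma is_derive_Rpower_comp (h : R -> R) (x dh beta : R) :
  0 < h x -> is_derive h x dh ->
  is_derive (fun y => Rpower (h y) beta) x (beta * Rpower (h x) (beta - 1) * dh).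
Proof.
  intros Hpos Hd.
  assert (Hpow : is_derive (fun y => Rpower y beta) (h x) (beta * Rpower (h x) (beta - 1)))
    by (apply is_derive_Reals, derivable_pt_lim_power, Hpos).
  pose proof (is_derive_comp _ h x _ _ Hpow Hd) as C.
  replace (beta * Rpower (h x) (beta - 1) * dh)
    with (scal dh (beta * Rpower (h x) (beta - 1)))
    by (unfold scal; simpl; unfold mult; simpl; ring).
  exact C.
Qed.

(* If h' <= -k h^alpha with h > 0, then (h^(1-alpha))' <= -k (1-alpha):
   the exponent 1 - alpha exactly cancels the sublinear decay rate. *)
Lemma sublinear_decay_rate (hx dh k alpha : R) :
  0 < hx -> alpha < 1 -> dh <= - k * Rpower hx alpha ->
  (1 - alpha) * Rpower hx (1 - alpha - 1) * dh <= - (k * (1 - alpha)).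
Proof.
  intros Hpos Halpha Hrate.
  assert (Hinv : Rpower hx (1 - alpha - 1) * Rpower hx alpha = 1).
  { rewrite <- Rpower_plus. replace (1 - alpha - 1 + alpha) with 0 by ring.
    apply Rpower_O; exact Hpos. }
  pose proof (Rpower_pos hx (1 - alpha - 1)).
  apply Rle_trans with ((1 - alpha) * Rpower hx (1 - alpha - 1) * (- k * Rpower hx alpha)).
  - apply Rmult_le_compat_l; nra.
  - replace ((1 - alpha) * Rpower hx (1 - alpha - 1) * (- k * Rpower hx alpha))
      with (- (k * (1 - alpha)) * (Rpower hx (1 - alpha - 1) * Rpower hx alpha)) by ring.
    rewrite Hinv. lra.
Qed.

(* Finite-time extinction: a nonincreasing h >= 0, bounded by H, with
   h' <= -k h^alpha while h > 0 (0 < alpha < 1) vanishes after the time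
   H^(1-alpha) / (k (1-alpha)), since h^(1-alpha) then decreases at rate
   at least k (1-alpha). *)
Lemma finite_time_extinction (h dh : R -> R) (k alpha H : R) :
  0 < k -> 0 < alpha < 1 ->
  (forall t, 0 < t -> is_derive h t (dh t)) ->
  (forall t, 0 < t -> dh t <= 0) ->
  (forall t, 0 < t -> 0 < h t -> dh t <= - k * Rpower (h t) alpha) ->
  (forall t, 0 < t -> 0 <= h t <= H) ->
  forall t, Rpower H (1 - alpha) / (k * (1 - alpha)) < t -> h t = 0.
Proof.
  intros Hk Halpha Hd Hneg Hrate Hbound t Ht.
  set (T0 := Rpower H (1 - alpha) / (k * (1 - alpha))) in Ht.
  assert (HT0 : k * (1 - alpha) * T0 = Rpower H (1 - alpha)) by (unfold T0; field; lra).
  assert (HT0pos : 0 < T0) by (apply Rdiv_lt_0_compat; [apply Rpower_pos | nra]).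
  set (s := t - T0).
  destruct (Req_dec (h t) 0) as [E | Hne]; [exact E | exfalso].
  (* h stays positive on [s, t] since it is nonincreasing and h t > 0. *)
  assert (Hpos : forall x, s <= x <= t -> 0 < h x).
  { intros x Hx. pose proof (Hbound t ltac:(lra)).
    pose proof (nonincreasing_of_derive h dh 0 Hd Hneg x t
                  ltac:(unfold s in *; lra) ltac:(lra)). lra. }
  set (V := fun x => Rpower (h x) (1 - alpha)).
  set (dV := fun x => (1 - alpha) * Rpower (h x) (1 - alpha - 1) * dh x).
  assert (HV : forall x, s <= x <= t -> is_derive V x (dV x)).
  { intros x Hx. apply is_derive_Rpower_comp; [apply Hpos; exact Hx |].
    apply Hd. unfold s in *; lra. }
  destruct (MVT_gen V s t dV) as [xi [Hxi Hmvt]];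
    rewrite ?Rmin_left, ?Rmax_right in * by (unfold s; lra).
  - intros x Hx. apply HV. lra.
  - intros x Hx. eapply continuity_pt_of_derive, HV. lra.
  - assert (HdV : dV xi <= - (k * (1 - alpha))).
    { apply sublinear_decay_rate; [apply Hpos; exact Hxi | lra |].
      apply Hrate; [unfold s in *; lra | apply Hpos; exact Hxi]. }
    assert (HVs : V s <= Rpower H (1 - alpha)).
    { apply Rle_Rpower_l; [lra |]. split; [apply Hpos; lra |].
      apply Hbound; unfold s; lra. }
    assert (HVt : 0 < V t) by apply Rpower_pos.
    replace (t - s) with T0 in Hmvt by (unfold s; ring).
    nra.
Qed.

(* Exponent alpha and rate k of the Lyapunov inequality h' <= -k h^alpha
   satisfied by h = e^2 along e' = -lam phi(e). *)
Definition lyap_exponent (r0 r2 : R) : R := (1 + r2 * r0) / 2.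
Definition lyap_rate (lam b2 r0 : R) : R := 2 * lam * Rpower b2 r0.

Definition settling_time (lam b2 r0 r2 M : R) : R :=
  Rpower (M * M) (1 - lyap_exponent r0 r2)
  / (lyap_rate lam b2 r0 * (1 - lyap_exponent r0 r2)).

Lemma settling_time_pos (lam b2 r0 r2 M : R) :
  0 < lam -> 0 < r0 -> 0 < r2 -> r2 * r0 < 1 ->
  0 < settling_time lam b2 r0 r2 M.
Proof.
  intros Hlam Hr0 Hr2 Ha. unfold settling_time, lyap_exponent, lyap_rate.
  pose proof (Rpower_pos b2 r0).
  apply Rdiv_lt_0_compat; [apply Rpower_pos |].
  apply Rmult_lt_0_compat; nra.
Qed.

Lemma error_fixed_time (lam b1 b2 r0 r1 r2 M : R) (e : R -> R) :
  0 < lam -> 0 < b1 -> 0 < b2 -> 0 < r0 -> 0 < r2 -> r2 * r0 < 1 ->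
  (forall t, 0 < t -> is_derive e t (- lam * phi b1 b2 r0 r1 r2 (e t))) ->
  filterlim e (at_right 0) (locally (e 0)) ->
  Rabs (e 0) <= M ->
  forall t, settling_time lam b2 r0 r2 M < t -> e t = 0.
Proof.
  intros Hlam Hb1 Hb2 Hr0 Hr2 Ha He Hcont HM t Ht.
  set (h := fun s => e s * e s).
  set (dh := fun s => - 2 * lam * (e s * phi b1 b2 r0 r1 r2 (e s))).
  assert (Hh : forall s, 0 < s -> is_derive h s (dh s)).
  { intros s Hs.
    pose proof (is_derive_mult e e s _ _ (He s Hs) (He s Hs) Rmult_comm) as D.
    unfold h, dh. replace (- 2 * lam * (e s * phi b1 b2 r0 r1 r2 (e s))) with
      ((- lam * phi b1 b2 r0 r1 r2 (e s)) * e s + e s * (- lam * phi b1 b2 r0 r1 r2 (e s)))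
      by ring.
    exact D. }
  assert (Hneg : forall s, 0 < s -> dh s <= 0).
  { intros s _. unfold dh. pose proof (phi_sign b1 b2 r0 r1 r2 (e s) Hb1 Hb2 Hr0). nra. }
  assert (Hinit : forall s, 0 < s -> h s <= h 0).
  { apply le_initial_of_nonincreasing.
    - exact (nonincreasing_of_derive h dh 0 Hh Hneg).
    - exact (lim_mult e e (e 0) (e 0) Hcont Hcont). }
  assert (Hrate : forall s, 0 < s -> 0 < h s ->
            dh s <= - lyap_rate lam b2 r0 * Rpower (h s) (lyap_exponent r0 r2)).
  { intros s _ Hpos.
    assert (Hes : e s <> 0) by (intros E; unfold h in Hpos; rewrite E in Hpos; lra).
    pose proof (phi_coercive b1 b2 r0 r1 r2 (e s) Hb1 Hb2 Hr0 Hes).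
    unfold dh, lyap_rate, lyap_exponent, h. nra. }
  assert (Hbound : forall s, 0 < s -> 0 <= h s <= M * M).
  { intros s Hs. pose proof (Hinit s Hs). unfold h in *.
    pose proof (Rabs_pos (e 0)).
    assert (e 0 * e 0 = Rabs (e 0) * Rabs (e 0))
      by (rewrite <- Rabs_mult, Rabs_right; nra).
    nra. }
  assert (Hht : h t = 0).
  { apply (finite_time_extinction h dh (lyap_rate lam b2 r0) (lyap_exponent r0 r2) (M * M));
      try assumption.
    - unfold lyap_rate. pose proof (Rpower_pos b2 r0). nra.
    - unfold lyap_exponent. nra. }
  unfold h in Hht. nra.
Qed.

Lemma vdot_sub_r (u a b : vec3) : vdot u (vsub a b) = vdot u a - vdot u b.
Proof. unfold vdot, vsub, vx, vy, vz; simpl. ring. Qed.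

Lemma vdot_self_pos (u w : vec3) : u <> w -> 0 < vdot (vsub u w) (vsub u w).
Proof.
  intros H. destruct u as [[u1 u2] u3], w as [[w1 w2] w3].
  unfold vdot, vsub, vx, vy, vz; simpl.
  destruct (Req_dec (u1 - w1) 0), (Req_dec (u2 - w2) 0), (Req_dec (u3 - w3) 0);
    try nra.
  exfalso; apply H. f_equal; [f_equal |]; lra.
Qed.

Lemma J_io_dag_right_inverse (u w : vec3) (s : R) :
  u <> w -> J_io u w (J_io_dag u w s) = s.
Proof.
  intros H. pose proof (vdot_self_pos u w H) as Hpos.
  unfold J_io, J_io_dag, vnorm.
  rewrite <- Rsqr_pow2, Rsqr_sqrt by lra. revert Hpos.
  destruct u as [[u1 u2] u3], w as [[w1 w2] w3].
  unfold vdot, vscale, vsub, vx, vy, vz; simpl. intros Hpos. field. lra.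
Qed.

Lemma is_deriv3_sub (f g : R -> vec3) (f' g' : vec3) (t : R) :
  is_deriv3 f f' t -> is_deriv3 g g' t ->
  is_deriv3 (fun s => vsub (f s) (g s)) (vsub f' g') t.
Proof.
  intros [F1 [F2 F3]] [G1 [G2 G3]].
  split; [| split].
  - exact (is_derive_minus _ _ t _ _ F1 G1).
  - exact (is_derive_minus _ _ t _ _ F2 G2).
  - exact (is_derive_minus _ _ t _ _ F3 G3).
Qed.

Lemma is_derive_half_sqnorm (u : R -> vec3) (u' : vec3) (t : R) :
  is_deriv3 u u' t -> is_derive (fun s => / 2 * vdot (u s) (u s)) t (vdot (u t) u').
Proof.
  intros [H1 [H2 H3]].
  pose proof (is_derive_mult _ _ t _ _ H1 H1 Rmult_comm) as X.
  pose proof (is_derive_mult _ _ t _ _ H2 H2 Rmult_comm) as Y.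
  pose proof (is_derive_mult _ _ t _ _ H3 H3 Rmult_comm) as Z.
  pose proof (is_derive_scal _ t (/ 2) _
                (is_derive_plus _ _ t _ _ (is_derive_plus _ _ t _ _ X Y) Z)) as D.
  unfold vdot. replace (vx (u t) * vx u' + vy (u t) * vy u' + vz (u t) * vz u')
    with (/ 2 * ((vx u' * vx (u t) + vx (u t) * vx u') + (vy u' * vy (u t) + vy (u t) * vy u')
                 + (vz u' * vz (u t) + vz (u t) * vz u'))) by field.
  exact D.
Qed.

(* The closed loop reduces to the scalar reaching law e' = -lam phi(e) for the
   task error e = rho~_io: the feed-forward term J_i^o v_i^o cancels the
   obstacle motion. *)
Lemma closed_loop_error (d lam b1 b2 r0 r1 r2 : R) (p po : R -> vec3) (vo : vec3) (t : R) :
  is_deriv3 po vo t ->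
  is_deriv3 p (v_io d lam b1 b2 r0 r1 r2 (p t) (po t) vo) t ->
  p t <> po t ->
  is_derive (fun s => rho_tilde d (p s) (po s)) t
    (- lam * phi b1 b2 r0 r1 r2 (rho_tilde d (p t) (po t))).
Proof.
  intros Hpo Hp Hne.
  set (v := v_io d lam b1 b2 r0 r1 r2 (p t) (po t) vo) in Hp.
  assert (Hv : vdot (vsub (p t) (po t)) v
               = lam * phi b1 b2 r0 r1 r2 (rho_tilde d (p t) (po t))
                 + vdot (vsub (p t) (po t)) vo).
  { unfold v, v_io. cbv zeta.
    pose proof (J_io_dag_right_inverse (p t) (po t)
      (lam * phi b1 b2 r0 r1 r2 (rho_tilde d (p t) (po t)) - J_i_o (p t) (po t) vo) Hne) as E.
    unfold J_io, phi in E. rewrite E. unfold J_i_o, phi. ring. }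
  pose proof (is_derive_half_sqnorm _ _ t (is_deriv3_sub p po _ _ t Hp Hpo)) as Hrho.
  pose proof (is_derive_minus _ _ t _ _ (is_derive_const (d ^ 2 / 2) t) Hrho) as D.
  simpl in D. rewrite vdot_sub_r, Hv in D.
  replace (- lam * phi b1 b2 r0 r1 r2 (rho_tilde d (p t) (po t)))
    with (minus 0 (lam * phi b1 b2 r0 r1 r2 (rho_tilde d (p t) (po t))
                   + vdot (vsub (p t) (po t)) vo - vdot (vsub (p t) (po t)) vo))
    by (unfold minus, plus, opp; simpl; ring).
  exact D.
Qed.

Lemma error_right_cont (d : R) (p po : R -> vec3) :
  right_cont3 p 0 -> right_cont3 po 0 ->
  filterlim (fun s => rho_tilde d (p s) (po s)) (at_right 0)
    (locally (rho_tilde d (p 0) (po 0))).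
Proof.
  intros [P1 [P2 P3]] [Q1 [Q2 Q3]].
  pose proof (lim_minus _ _ _ _ P1 Q1) as X.
  pose proof (lim_minus _ _ _ _ P2 Q2) as Y.
  pose proof (lim_minus _ _ _ _ P3 Q3) as Z.
  exact (lim_minus _ _ _ _ (filterlim_const (d ^ 2 / 2))
           (lim_mult _ _ _ _ (filterlim_const (/ 2))
              (lim_plus _ _ _ _ (lim_plus _ _ _ _ (lim_mult _ _ _ _ X X)
                 (lim_mult _ _ _ _ Y Y)) (lim_mult _ _ _ _ Z Z)))).
Qed.

Lemma error_initial_bound (d : R) (u w : vec3) :
  0 < d -> vnorm (vsub u w) <= d -> Rabs (rho_tilde d u w) <= d ^ 2 / 2.
Proof.
  intros Hd Hin. unfold rho_tilde, rho_io. unfold vnorm in Hin.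
  set (D := vdot (vsub u w) (vsub u w)) in *.
  assert (HD : 0 <= D) by (unfold D, vdot; nra).
  pose proof (sqrt_sqrt D HD); pose proof (sqrt_pos D).
  apply Rabs_le. simpl. nra.
Qed.

Lemma error_zero_distance (d : R) (u w : vec3) :
  0 < d -> rho_tilde d u w = 0 -> vnorm (vsub u w) = d.
Proof.
  intros Hd H0. unfold rho_tilde, rho_io in H0. unfold vnorm.
  replace (vdot (vsub u w) (vsub u w)) with (d ^ 2) by lra.
  apply sqrt_pow2; lra.
Qed.

Theorem lemma2 (d lam b1 b2 r0 r1 r2 : R)
  (Hd : 0 < d) (Hlam : 0 < lam) (Hb1 : 0 < b1) (Hb2 : 0 < b2)
  (Hr0 : 0 < r0) (Hr1 : 0 < r1) (Hr2 : 0 < r2)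
  (Hr10 : r1 * r0 > 1) (Hr20 : r2 * r0 < 1) (Hr0int : 1 / 2 < r0 < 1) :
  exists Tmax : R, 0 < Tmax /\
  forall (p po vo : R -> vec3),
    (forall t, 0 < t -> is_deriv3 po (vo t) t) ->
    (forall t, 0 < t -> is_deriv3 p (v_io d lam b1 b2 r0 r1 r2 (p t) (po t) (vo t)) t) ->
    right_cont3 p 0 -> right_cont3 po 0 ->
    (forall t, 0 <= t -> p t <> po t) ->
    vnorm (vsub (p 0) (po 0)) <= d ->
    exists T : R, 0 < T <= Tmax /\
      forall t, T <= t ->
        d <= vnorm (vsub (p t) (po t)) /\ rho_tilde d (p t) (po t) = 0.
Proof.
  set (Ts := settling_time lam b2 r0 r2 (d ^ 2 / 2)).
  assert (HTs : 0 < Ts) by (apply settling_time_pos; assumption).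
  exists (Ts + 1). split; [lra |].
  intros p po vo Hpo Hp Hrcp Hrcpo Hne Hinit.
  exists (Ts + 1). split; [lra |]. intros t Ht.
  assert (Herr : rho_tilde d (p t) (po t) = 0).
  { apply (error_fixed_time lam b1 b2 r0 r1 r2 (d ^ 2 / 2)
             (fun s => rho_tilde d (p s) (po s))); try assumption.
    - intros s Hs. apply (closed_loop_error _ _ _ _ _ _ _ p po (vo s)); auto.
      apply Hne; lra.
    - apply error_right_cont; assumption.
    - apply error_initial_bound; assumption.
    - fold Ts. lra. }
  split; [| exact Herr].
  rewrite (error_zero_distance d _ _ Hd Herr). lra.
Qed.
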